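(* Let $\Re$ be a commutative ring with unit, let $n\ge 3$, and let $U_n$ be the cycle with vertices $v_1,\dots,v_n$ and edges $(v_i,v_{i+1})$, $i=1,\dots,n$ (indices taken modulo $n$, so $v_0=v_n$, $v_{n+1}=v_1$), equipped with a vertex-weight function $f_n:V(U_n)\to\Re$ and an edge-weight function $g_n:E(U_n)\to\Re$. Then for every fixed vertex $v_j$, \[ F(U_n; f_n, g_n; v_j)=\sum_{q=1}^{n}\Big(f_n(v_j)\prod_{k=0}^{q-2}g_n(v_k^1,v_k^2)f_n(v_k^2)\Big(1+\sum_{s=0}^{n-q-1}\prod_{k=0}^{s}g_n(v_k^3,v_k^4)f_n(v_k^4)\Big)\Big), \] where $v_k^1=v_{(j+k)\bmod n}$, $v_k^2=v_{(j+k+1)\bmod n}$, $v_k^3=v_{(n+j-k)\bmod n}$, $v_k^4=v_{(n+j-k-1)\bmod n}$ (with $v_0$ meaning $v_n$), and empty products equal $1$.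
   Context: For a graph $G$ with vertex weights $f$ and edge weights $g$ in $\Re$, a subtree is a nonempty subgraph of $G$ that is a tree (single vertices included). The weight of a subtree $T$ is $\omega(T)=\prod_{v\in V(T)}f(v)\prod_{e\in E(T)}g(e)$. For a vertex $v$, $F(G;f,g;v)=\sum \omega(T)$, the sum over all subtrees $T$ of $G$ containing $v$. *)

From HB Require Import structures.
From mathcomp Require Import all_boot all_order all_algebra.
From mathcomp Require Import boolp.
Set Implicit Arguments. Unset Strict Implicit. Unset Printing Implicit Defensive.
Import GRing.Theory.
Local Open Scope ring_scope.

Section Subtrees.
Variable T : finType.

(* A simple graph on vertex set T is given by a symmetric irreflexive
   adjacency relation e; its edges are the 2-element sets [set x; y]
   with e x y. *)
Definition is_edge (e : rel T) (A : {set T}) : Prop :=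
  exists x y, e x y /\ A = [set x; y].

Definition is_subgraph (e : rel T) (S : {set T}) (E : {set {set T}}) : Prop :=
  forall A, A \in E -> is_edge e A /\ A \subset S.

Definition sub_adj (E : {set {set T}}) : rel T := fun x y => [set x; y] \in E.

Definition sub_connected (S : {set T}) (E : {set {set T}}) : Prop :=
  forall x y, x \in S -> y \in S -> connect (sub_adj E) x y.

Definition sub_acyclic (E : {set {set T}}) : Prop :=
  ~ exists p : seq T, [/\ (3 <= size p)%N, uniq p & cycle (sub_adj E) p].

Definition is_subtree (e : rel T) (S : {set T}) (E : {set {set T}}) : Prop :=
  [/\ S != set0, is_subgraph e S E, sub_connected S E & sub_acyclic E].

Definition tree_weight (R : comPzRingType) (f : T -> R) (g : {set T} -> R)
    (S : {set T}) (E : {set {set T}}) : R :=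
  (\prod_(v in S) f v) * (\prod_(A in E) g A).

Definition Fsub (R : comPzRingType) (e : rel T) (f : T -> R) (g : {set T} -> R)
    (v : T) : R :=
  \sum_(p : {set T} * {set {set T}} | `[< is_subtree e p.1 p.2 /\ v \in p.1 >])
     tree_weight f g p.1 p.2.
End Subtrees.

(* The cycle U_n on 'I_n: vertex v_i (1 <= i <= n) is the ordinal i %% n,
   so v_n is ordinal 0; edges {v_i, v_{i+1}}. *)
Definition cycle_adj (n : nat) : rel 'I_n :=
  fun x y => (val y == (val x).+1 %% n)%N || (val x == (val y).+1 %% n)%N.

Lemma n3_pos (n : nat) : (3 <= n)%N -> (0 < n)%N.
Proof. by move=> H; apply: leq_trans H. Qed.

Definition cv (n : nat) (Hn : (3 <= n)%N) (m : nat) : 'I_n :=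
  Ordinal (ltn_pmod m (n3_pos Hn)).
Arguments cycle_adj n : clear implicits.

From HB Require Import structures.
From mathcomp Require Import all_boot all_order all_algebra.
From mathcomp Require Import boolp.
From mathcomp Require Import zify ring.
Import GRing.Theory.
Set Implicit Arguments. Unset Strict Implicit. Unset Printing Implicit Defensive.

(* A subtree of the cycle misses some edge {m, m+1}, since otherwise the whole
   cycle would be a cycle of it.  Cutting the cycle there leaves a path on which
   the offset from m+1 changes by exactly one along every edge; a connected vertex
   set of that path is an interval and a tree on it must use all of its edges.
   Hence the subtrees of U_n are exactly the arcs: l consecutive vertices with
   the l - 1 edges joining them, 1 <= l <= n.  An arc through v_j is determined
   by the number q >= 1 of its vertices from v_j on and the number of its
   vertices before v_j, and its weight splits accordingly into the two products
   of the formula. *)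

Lemma modn_lt2n n a : (a < n + n)%N -> (a %% n = if a < n then a else a - n)%N.
Proof.
move=> a2n; case: ltnP => [|na]; first exact: modn_small.
by rewrite -{1}(subnK na) modnDr modn_small // ltn_subLR.
Qed.

Lemma big_nat_addn (R : Type) (idx : R) (op : Monoid.law idx) (F : nat -> R) m k :
  \big[op/idx]_(0 <= t < m + k) F t
  = op (\big[op/idx]_(0 <= t < m) F t) (\big[op/idx]_(0 <= t < k) F (m + t)).
Proof.
elim: k => [|k IHk]; first by rewrite addn0 [X in op _ X]big_geq ?Monoid.mulm1.
by rewrite addnS !big_nat_recr //= IHk Monoid.mulmA.
Qed.

Lemma eq_set2 (T : finType) (a b c d : T) : c != d ->
  [set a; b] = [set c; d] -> (a = c /\ b = d) \/ (a = d /\ b = c).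
Proof.
move=> + abcd.
have /set2P cab : c \in [set a; b] by rewrite abcd set21.
have /set2P dab : d \in [set a; b] by rewrite abcd set22.
by case: cab dab => -> [] ->; rewrite ?eqxx // => _; [left | right].
Qed.

Lemma sub_adj_sym (T : finType) (E : {set {set T}}) : symmetric (sub_adj E).
Proof. by move=> x y; rewrite /sub_adj setUC. Qed.

Section Graded.
Variables (T : Type) (e : rel T) (h : T -> nat).

Definition graded := forall x y, e x y -> h y = (h x).+1 \/ h x = (h y).+1.

Hypothesis e_graded : graded.

Lemma graded_path_cross x p z : path e x p -> (h x <= z < h (last x p))%N ->
  exists u w, [/\ e u w, h u = z & h w = z.+1].
Proof.
elim: p x => [|y p IHp] x /=; first lia.
move=> /andP[exy yp] zr.
have [hy|hx] := e_graded exy; last by apply: IHp; lia.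
have [<-|zx] := eqVneq (h x) z; first by exists x, y.
by apply: IHp; lia.
Qed.

End Graded.

Lemma graded_acyclic (T : finType) (e : rel T) (h : T -> nat) :
  graded e h -> injective h ->
  ~ exists p : seq T, [/\ (3 <= size p)%N, uniq p & cycle e p].
Proof.
(* At a vertex of maximal height both neighbours on the cycle lie one level
   lower, so injectivity of [h] identifies them. *)
move=> e_graded h_inj [p [size_p uniq_p cycle_p]].
case: p size_p uniq_p cycle_p => [//|x0 p0] size_p uniq_p cycle_p.
have [x xp x_max] := @arg_maxnP T x0 (fun y => y \in x0 :: p0) h (mem_head x0 p0).
have [i s' rot_p] := rot_to xp.
case: s' rot_p => [|y1 [|y2 s]] rot_p; try by move: size_p; rewrite -(size_rot i) rot_p.
have {cycle_p} : cycle e [:: x, y1, y2 & s] by rewrite -rot_p rot_cycle.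
rewrite /cycle rcons_path /= => /andP[/andP[exy1 _] eykx].
have {uniq_p} : uniq [:: x, y1, y2 & s] by rewrite -rot_p rot_uniq.
rewrite /= inE negb_or => /andP[_ /andP[y1_notin _]].
have below y : y \in [:: y1, y2 & s] -> (h y <= h x)%N.
  by move=> ys; apply: x_max; rewrite -(mem_rot i) rot_p inE ys orbT.
set yk := last y2 s in eykx.
have ykin : yk \in y2 :: s by exact: mem_last.
have h_y1 : h y1 = (h x).-1.
  have := below y1 (mem_head _ _); have [] := e_graded _ _ exy1; lia.
have h_yk : h yk = (h x).-1.
  have := below yk; rewrite inE ykin orbT => /(_ isT); have [] := e_graded _ _ eykx; lia.
by move: y1_notin; rewrite (h_inj y1 yk) ?ykin // h_y1 h_yk.
Qed.

Section Cycle.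
Variables (n : nat) (Hn : (3 <= n)%N).

Definition vshift (a : 'I_n) (t : nat) : 'I_n := cv Hn (a + t).
Definition offset (a v : 'I_n) : nat := (v + n - a) %% n.
Definition vsucc (v : 'I_n) : 'I_n := vshift v 1.
Definition cedge (v : 'I_n) : {set 'I_n} := [set v; vsucc v].

Lemma vshift0 a : vshift a 0 = a.
Proof. by apply: val_inj; rewrite /= addn0 modn_small. Qed.

Lemma vshift_add a s t : vshift (vshift a s) t = vshift a (s + t).
Proof. by apply: val_inj; rewrite /= modnDml addnA. Qed.

Lemma vshiftnD a t : vshift a (n + t) = vshift a t.
Proof. by apply: val_inj; rewrite /= addnCA modnDl. Qed.

Lemma vshiftn a : vshift a n = a.
Proof. by rewrite -[X in vshift a X]addn0 vshiftnD vshift0. Qed.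

Lemma offset_lt a v : (offset a v < n)%N.
Proof. by rewrite ltn_pmod // (n3_pos Hn). Qed.

Lemma offsetK a : cancel (offset a) (vshift a).
Proof.
move=> v; apply: val_inj; rewrite /= modnDmr.
have -> : (a + (v + n - a) = v + n)%N by have := ltn_ord a; lia.
by rewrite modnDr modn_small.
Qed.

Lemma vshiftK a t : offset a (vshift a t) = (t %% n)%N.
Proof.
rewrite /offset /= -addnBA ?modnDml; last exact: ltnW.
have -> : (a + t + (n - a) = t + n)%N by have := ltn_ord a; lia.
exact: modnDr.
Qed.

Lemma offset_inj a : injective (offset a).
Proof. exact: can_inj (offsetK a). Qed.
Arguments offset_inj : clear implicits.

Lemma offset_trans a b v : offset a v = ((offset a b + offset b v) %% n)%N.
Proof.
rewrite /offset modnDm.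
have -> : (b + n - a + (v + n - b) = (v + n - a) + n)%N.
  by have := ltn_ord a; have := ltn_ord b; lia.
by rewrite modnDr.
Qed.

Lemma offset_vshift a v t : offset a (vshift v t) = ((offset a v + t) %% n)%N.
Proof. by rewrite (offset_trans a v) vshiftK modnDmr. Qed.

Lemma offset_self a : offset a a = 0%N.
Proof. by rewrite -{2}(vshift0 a) vshiftK mod0n. Qed.

Lemma vsuccK : cancel vsucc (vshift^~ n.-1).
Proof. by move=> v; rewrite /vsucc vshift_add add1n prednK ?vshiftn // (n3_pos Hn). Qed.

Lemma vsucc_inj : injective vsucc.
Proof. exact: can_inj vsuccK. Qed.

Lemma offset_vsucc_self v : offset (vsucc v) v = n.-1.
Proof. by rewrite -{2}(vsuccK v) vshiftK modn_small // prednK // (n3_pos Hn). Qed.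

Lemma cedge_inj : injective cedge.
Proof.
have shift_id v t : vshift v t = v -> (t %% n = 0)%N.
  by move/(congr1 (offset v)); rewrite vshiftK offset_self.
move=> x y exy; have /set2P[//|xy] : x \in cedge y by rewrite -exy set21.
have /set2P : vsucc x \in cedge y by rewrite -exy set22.
rewrite xy => -[|/shift_id]; last by rewrite modn_small // ltnW.
by rewrite /vsucc vshift_add => /shift_id; rewrite modn_small.
Qed.

Lemma cycle_adj_vsucc v : cycle_adj n v (vsucc v).
Proof. by rewrite /cycle_adj /= addn1 eqxx. Qed.

Lemma cycle_adj_cedge x y :
  cycle_adj n x y -> [set x; y] = cedge x \/ [set x; y] = cedge y.
Proof.
have vsuccE v : vsucc v = cv Hn v.+1 by apply: val_inj; rewrite /= addn1.
case/orP=> /eqP xy; [left | right; rewrite setUC];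
  by congr [set _; _]; rewrite vsuccE; apply: val_inj.
Qed.

Lemma cycle_subgraph_cedge S E A :
  is_subgraph (cycle_adj n) S E -> A \in E -> exists v, A = cedge v.
Proof.
by move=> sub /sub[[x [y [/cycle_adj_cedge[]-> ->]]] _]; [exists x | exists y].
Qed.

Lemma iter_vsucc k a : iter k vsucc a = vshift a k.
Proof. by elim: k => [|k IHk]; rewrite ?vshift0 // iterS IHk /vsucc vshift_add addn1. Qed.

Lemma order_vsucc a : order vsucc a = n.
Proof.
rewrite -[RHS]card_ord; apply: eq_card => v.
by rewrite -(offsetK a v) -iter_vsucc [_ \in _]fconnect_iter.
Qed.

Lemma acyclic_missing_cedge (E : {set {set 'I_n}}) :
  sub_acyclic E -> exists m, cedge m \notin E.
Proof.
move=> acyclic_E; apply/existsP; apply: contraT => /existsPn all_in.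
(* Otherwise the orbit of [vsucc], which is the whole cycle, is a cycle of E. *)
case: acyclic_E; set a := cv Hn 0; exists (orbit vsucc a); split.
- by rewrite size_orbit order_vsucc.
- exact: orbit_uniq.
- apply: sub_cycle (cycle_orbit vsucc_inj a) => u _ /eqP <-.
  exact/negbNE/all_in.
Qed.

Lemma cedge_graded b (E : {set {set 'I_n}}) :
    (forall A, A \in E -> exists2 v, A = cedge v & ((offset b v).+1 < n)%N) ->
  graded (sub_adj E) (offset b).
Proof.
move=> E_cedge x y /E_cedge[v xyv v_lt].
have succ_v : offset b (vsucc v) = (offset b v).+1.
  by rewrite offset_vshift addn1 modn_small.
have v_neq : v != vsucc v.
  by apply/eqP => /(congr1 (offset b)); rewrite succ_v; lia.
by have [[-> ->]|[-> ->]] := eq_set2 v_neq xyv; [left | right].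
Qed.

Definition arc (a : 'I_n) (l : nat) : {set 'I_n} * {set {set 'I_n}} :=
  ([set v | offset a v < l], cedge @: [set v | (offset a v).+1 < l])%N.

Lemma mem_arc_edges a l v : (cedge v \in (arc a l).2) = ((offset a v).+1 < l)%N.
Proof. by rewrite mem_imset ?inE //; exact: cedge_inj. Qed.

Lemma arc_subtree a l :
  (0 < l <= n)%N -> is_subtree (cycle_adj n) (arc a l).1 (arc a l).2.
Proof.
move=> /andP[l_gt0 l_le].
have arc_cedge A : A \in (arc a l).2 -> exists2 v, A = cedge v & ((offset a v).+1 < l)%N.
  by case/imsetP=> v; rewrite inE; exists v.
have succ_v v : ((offset a v).+1 < l)%N -> offset a (vsucc v) = (offset a v).+1.
  by move=> vl; rewrite offset_vshift addn1 modn_small //; lia.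
have path_a t : (t < l)%N -> connect (sub_adj (arc a l).2) a (vshift a t).
  elim: t => [|t IHt] tl; first by rewrite vshift0.
  apply: connect_trans (IHt (ltnW tl)) (connect1 _).
  rewrite -addn1 -vshift_add; change (cedge (vshift a t) \in (arc a l).2).
  by rewrite mem_arc_edges vshiftK modn_small //; lia.
split.
- by apply/set0Pn; exists a; rewrite inE offset_self.
- move=> A /arc_cedge[v -> vl]; split.
    by exists v, (vsucc v); split; [exact: cycle_adj_vsucc|].
  by apply/subsetP => x /set2P[]->; rewrite inE ?succ_v //; lia.
- move=> x y; rewrite !inE => xl yl.
  rewrite -(offsetK a x) -(offsetK a y); apply: connect_trans (path_a _ yl).
  by rewrite (sym_connect_sym (@sub_adj_sym _ _)); exact: path_a.
- have graded_arc : graded (sub_adj (arc a l).2) (offset a).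
    by apply: cedge_graded => A /arc_cedge[v -> vl]; exists v => //; lia.
  exact: graded_acyclic graded_arc (offset_inj a).
Qed.

Lemma cut_subgraph_cedge S E m : is_subgraph (cycle_adj n) S E -> cedge m \notin E ->
  forall A, A \in E -> exists2 v, A = cedge v & ((offset (vsucc m) v).+1 < n)%N.
Proof.
move=> sub mE A AE; have [v Av] := cycle_subgraph_cedge sub AE; exists v => //.
have : offset (vsucc m) v != offset (vsucc m) m.
  by rewrite (inj_eq (offset_inj _)); apply: contraNneq mE => <-; rewrite -Av.
by rewrite offset_vsucc_self; have := offset_lt (vsucc m) v; lia.
Qed.

Lemma subtree_interval S E : is_subtree (cycle_adj n) S E ->
  exists b lo hi, [/\ (lo <= hi < n)%N, S = [set v | lo <= offset b v <= hi]%N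
                    & E = cedge @: [set v | lo <= offset b v < hi]%N].
Proof.
move=> [/set0Pn[x0 x0S] sub conn acyclic_E].
have [m mE] := acyclic_missing_cedge acyclic_E.
(* Cutting the cycle at the missing edge, offsets from [b] grow by one along E. *)
pose b := vsucc m; have E_cedge := cut_subgraph_cedge sub mE.
have graded_E := cedge_graded E_cedge.
have E_S u w : sub_adj E u w -> u \in S /\ w \in S.
  by move=> /sub[_ /subsetP uwS]; split; apply: uwS; rewrite !inE eqxx ?orbT.
have [xlo xloS lo_min] := arg_minnP (offset b) x0S.
have [xhi xhiS hi_max] := arg_maxnP (offset b) x0S.
have cross z : (offset b xlo <= z < offset b xhi)%N -> cedge (vshift b z) \in E.
  move=> zr; have /connectP[p pE xhiE] := conn _ _ xloS xhiS.
  rewrite xhiE in zr; have [u [w [uw uz wz]]] := graded_path_cross graded_E pE zr.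
  by move: uw; rewrite -(offsetK b u) -(offsetK b w) uz wz -addn1 -vshift_add.
exists b, (offset b xlo), (offset b xhi); split.
- by rewrite (lo_min xhi xhiS) offset_lt.
- apply/setP => v; rewrite inE; apply/idP/idP => [vS|/andP[lo_v v_hi]].
    by rewrite (lo_min v vS) (hi_max v vS : _ <= _)%N.
  have [v_lt|v_ge] := ltnP (offset b v) (offset b xhi).
    have /E_S[] : cedge (vshift b (offset b v)) \in E by rewrite cross ?lo_v.
    by rewrite offsetK.
  by rewrite (offset_inj b v xhi) //; apply/eqP; rewrite eqn_leq v_hi.
- apply/setP => A; apply/idP/imsetP => [AE|[v]].
    have [v Av v_lt] := E_cedge A AE; exists v => //.
    have /E_S[vS sS] : cedge v \in E by rewrite -Av.
    rewrite inE (lo_min v vS); have := hi_max _ sS.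
    by rewrite offset_vshift addn1 modn_small.
  by rewrite inE => v_r ->; rewrite -{1}(offsetK b v) cross.
Qed.

Lemma interval_arc b lo hi : (lo <= hi < n)%N ->
  ([set v | lo <= offset b v <= hi]%N, cedge @: [set v | lo <= offset b v < hi]%N)
  = arc (vshift b lo) (hi - lo).+1.
Proof.
move=> lo_hi; set a := vshift b lo.
have offset_b v : offset b v = ((lo + offset a v) %% n)%N.
  by rewrite (offset_trans b a) vshiftK (@modn_small lo) //; lia.
have in_range v : ((lo <= offset b v <= hi) = (offset a v < (hi - lo).+1))%N
                  /\ ((lo <= offset b v < hi) = ((offset a v).+1 < (hi - lo).+1))%N.
  rewrite offset_b; have := offset_lt a v; move: (offset a v) => u u_lt.
  by rewrite modn_lt2n; [case: ifP; split; lia | lia].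
by rewrite (eq_finset _ (fun v => proj1 (in_range v)))
           (eq_finset _ (fun v => proj2 (in_range v))).
Qed.

Lemma subtree_arc S E : is_subtree (cycle_adj n) S E ->
  exists a l, (0 < l <= n)%N /\ (S, E) = arc a l.
Proof.
case/subtree_interval=> b [lo [hi [lo_hi -> ->]]].
by exists (vshift b lo), (hi - lo).+1; rewrite interval_arc //; split=> //; lia.
Qed.

Lemma arc_inj a a' l l' : (0 < l <= n)%N -> (0 < l' <= n)%N ->
  arc a l = arc a' l' -> a = a' /\ l = l'.
Proof.
move=> l_range l'_range [S_eq E_eq].
have memS v : (offset a v < l)%N = (offset a' v < l')%N.
  by move/setP/(_ v): S_eq; rewrite !inE.
have memE v : ((offset a v).+1 < l)%N = ((offset a' v).+1 < l')%N.
  by rewrite -!mem_arc_edges /arc E_eq.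
pose s := offset a a'; have s_lt : (s < n)%N := offset_lt a a'.
have offset_a v : offset a v = ((s + offset a' v) %% n)%N := offset_trans a a' v.
have s0 : s = 0%N.
  have := memE (vshift a' n.-1); have := memS a'.
  rewrite !offset_a offset_self addn0 (modn_small s_lt) vshiftK.
  rewrite (@modn_small n.-1) ?ltn_predL ?(n3_pos Hn) // modn_lt2n; last lia.
  by case: ifP; lia.
have a'E : a' = a by rewrite -(offsetK a a') -/s s0 vshift0.
subst a'.
split=> //; have [ll'|l'l|//] := ltngtP l l'.
- by have := memS (vshift a l); rewrite vshiftK modn_small; lia.
- by have := memS (vshift a l'); rewrite vshiftK modn_small; lia.
Qed.

(* The arc of the q vertices v_j, ..., v_(j+q-1) and the bb vertices v_(j-bb), ..., v_(j-1). *)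
Definition centered_arc (j : 'I_n) (q bb : nat) := arc (vshift j (n - bb)) (bb + q).

Lemma offset_centered j bb : (bb < n)%N -> offset (vshift j (n - bb)) j = bb.
Proof.
move=> bb_lt; have jE : vshift (vshift j (n - bb)) bb = j.
  by rewrite vshift_add subnK ?vshiftn // ltnW.
by rewrite -{2}jE vshiftK modn_small.
Qed.

Lemma subtree_centered_arcP j S E :
  is_subtree (cycle_adj n) S E /\ j \in S <->
  exists q bb, [/\ (0 < q)%N, (q + bb <= n)%N & (S, E) = centered_arc j q bb].
Proof.
split=> [[/subtree_arc[a [l [l_range SE]]] jS] | [q [bb [q_gt0 qbb SE]]]].
  have bb_lt : (offset a j < l)%N by move: jS; rewrite [S](congr1 fst SE) inE.
  exists (l - offset a j)%N, (offset a j); split; [lia | lia |].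
  rewrite SE /centered_arc subnKC ?(ltnW bb_lt) //; congr arc.
  by rewrite -{1}(offsetK a j) vshift_add subnKC ?vshiftn // ltnW ?offset_lt.
have [-> ->] : S = (centered_arc j q bb).1 /\ E = (centered_arc j q bb).2 by rewrite -SE.
split; first by apply: arc_subtree; lia.
by rewrite inE offset_centered; lia.
Qed.

Lemma centered_arc_inj j q bb q' bb' : (0 < q)%N -> (q + bb <= n)%N ->
    (0 < q')%N -> (q' + bb' <= n)%N ->
  centered_arc j q bb = centered_arc j q' bb' -> q = q' /\ bb = bb'.
Proof.
move=> q_gt0 qbb q'_gt0 qbb' /arc_inj[||a_eq l_eq]; try lia.
have bb_eq : bb = bb'.
  by rewrite -(offset_centered j (_ : bb < n)%N) ?a_eq ?offset_centered //; lia.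
by split=> //; lia.
Qed.

Lemma big_offset (R : Type) (idx : R) (op : Monoid.com_law idx) (F : 'I_n -> R) a l :
  (l <= n)%N ->
  \big[op/idx]_(v | (offset a v < l)%N) F v = \big[op/idx]_(0 <= t < l) F (vshift a t).
Proof.
move=> l_le; rewrite (big_nat_widen _ _ _ _ _ l_le) big_mkord.
rewrite (reindex (fun t : 'I_n => vshift a t)) /=.
  by apply: eq_bigl => t; rewrite vshiftK modn_small.
exists (fun v => Ordinal (offset_lt a v)) => [t _ | v _]; last exact: offsetK.
by apply: val_inj; rewrite /= vshiftK modn_small.
Qed.

Section Weights.
Variables (R : comPzRingType) (f : 'I_n -> R) (g : {set 'I_n} -> R).
Local Open Scope ring_scope.

Lemma arc_weight a l : (0 < l <= n)%N ->
  tree_weight f g (arc a l).1 (arc a l).2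
  = (\prod_(0 <= t < l) f (vshift a t)) * \prod_(0 <= t < l.-1) g (cedge (vshift a t)).
Proof.
move=> /andP[l_gt0 l_le]; rewrite /tree_weight big_imset /=; last first.
  by move=> x y _ _; exact: cedge_inj.
rewrite -big_offset // -(big_offset _ (fun v => g (cedge v))).
  by congr (_ * _); apply: eq_bigl => v; rewrite inE ?ltn_predRL.
exact: leq_trans (leq_pred l) l_le.
Qed.

Lemma centered_arc_weight j q bb : (0 < q)%N -> (q + bb <= n)%N ->
  tree_weight f g (centered_arc j q bb).1 (centered_arc j q bb).2 =
  f j * (\prod_(0 <= k < q.-1)
           (g [set cv Hn (j + k)%N; cv Hn (j + k + 1)%N] * f (cv Hn (j + k + 1)%N)))
      * \prod_(0 <= k < bb)
           (g [set cv Hn (n + j - k)%N; cv Hn (n + j - k - 1)%N]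
            * f (cv Hn (n + j - k - 1)%N)).
Proof.
move=> q_gt0 qbb; rewrite arc_weight; last lia.
set a := vshift j (n - bb).
have fwd t : vshift a (bb + t) = vshift j t.
  by rewrite vshift_add addnA subnK ?vshiftnD //; lia.
have bwd k : (k < bb)%N -> vshift a (bb - k.+1) = cv Hn (n + j - k - 1).
  by move=> k_lt; rewrite vshift_add; congr (cv Hn _); lia.
have bwd_succ k : (k < bb)%N -> vsucc (vshift a (bb - k.+1)) = cv Hn (n + j - k).
  by move=> k_lt; rewrite /vsucc !vshift_add; congr (cv Hn _); lia.
have -> : \prod_(0 <= t < bb + q) f (vshift a t)
    = (\prod_(0 <= k < bb) f (cv Hn (n + j - k - 1)))
      * (f j * \prod_(0 <= k < q.-1) f (cv Hn (j + k + 1))).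
  rewrite big_nat_addn big_nat_rev; congr (_ * _).
    by apply: eq_big_nat => k /andP[_ k_lt]; rewrite add0n bwd.
  case: q q_gt0 {qbb} => // q _; rewrite big_nat_recl //= fwd vshift0.
  by congr (_ * _); apply: eq_bigr => k _; rewrite fwd /vshift addn1 addnS.
have -> : \prod_(0 <= t < (bb + q).-1) g (cedge (vshift a t))
    = (\prod_(0 <= k < bb) g [set cv Hn (n + j - k); cv Hn (n + j - k - 1)])
      * \prod_(0 <= k < q.-1) g [set cv Hn (j + k); cv Hn (j + k + 1)].
  rewrite (_ : (bb + q).-1 = bb + q.-1)%N; last lia.
  rewrite big_nat_addn big_nat_rev; congr (_ * _); apply: eq_big_nat => k /andP[_ k_lt].
    by rewrite add0n /cedge bwd_succ // bwd // setUC.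
  by rewrite /cedge fwd /vsucc vshift_add /vshift addnA.
rewrite !big_split /=; ring.
Qed.

Lemma Fsub_cycle_centered j : Fsub (cycle_adj n) f g j =
  \sum_(1 <= q < n.+1) \sum_(0 <= bb < (n - q).+1)
     tree_weight f g (centered_arc j q bb).1 (centered_arc j q bb).2.
Proof.
pose D := [set x : 'I_n.+1 * 'I_n.+1 | (0 < x.1) && (x.1 + x.2 <= n)]%N.
pose ca (x : 'I_n.+1 * 'I_n.+1) := centered_arc j x.1 x.2.
have -> : \sum_(1 <= q < n.+1) \sum_(0 <= bb < (n - q).+1)
            tree_weight f g (centered_arc j q bb).1 (centered_arc j q bb).2
          = \sum_(x in D) tree_weight f g (ca x).1 (ca x).2.
  rewrite (big_nat_widenl 1 0) // big_mkord.
  under eq_bigr => q _ do rewrite (big_nat_widen _ _ n.+1) ?ltnS ?leq_subr // big_mkord.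
  rewrite pair_big_dep; apply: eq_bigl => -[q bb]; rewrite inE /=.
  by have := ltn_ord q; lia.
rewrite /Fsub -(big_imset (h := ca) (A := D) (fun p => tree_weight f g p.1 p.2)).
  apply: eq_bigl => -[S E] /=; apply/asboolP/imsetP.
    move=> /subtree_centered_arcP[q [bb [q_gt0 qbb SE]]].
    exists (inord q, inord bb); first by rewrite inE /= !inordK //; lia.
    by rewrite /ca /= !inordK //; lia.
  case=> -[q bb]; rewrite inE => /andP[q_gt0 qbb] SE.
  by apply/subtree_centered_arcP; exists q, bb.
move=> x y; rewrite !inE => /andP[? ?] /andP[? ?] /centered_arc_inj[] // q_eq bb_eq.
by rewrite [x]surjective_pairing [y]surjective_pairing; congr pair; apply: val_inj.
Qed.

End Weights.
End Cycle.

Local Open Scope ring_scope.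

Theorem theorem2 (R : comPzRingType) (n : nat) (Hn : (3 <= n)%N)
    (f : 'I_n -> R) (g : {set 'I_n} -> R) (j : 'I_n) :
  Fsub (cycle_adj n) f g j =
  \sum_(1 <= q < n.+1)
    (f j * (\prod_(0 <= k < q.-1)
              (g [set cv Hn (j + k)%N; cv Hn (j + k + 1)%N] * f (cv Hn (j + k + 1)%N)))
         * (1 + \sum_(0 <= s < n - q)
                  \prod_(0 <= k < s.+1)
                    (g [set cv Hn (n + j - k)%N; cv Hn (n + j - k - 1)%N]
                     * f (cv Hn (n + j - k - 1)%N)))).
Proof.
rewrite Fsub_cycle_centered; apply: eq_big_nat => q /andP[q_gt0 q_le].
rewrite big_nat_recl // mulrDr mulr1 mulr_sumr; congr (_ + _).
  by rewrite centered_arc_weight ?[X in _ * X = _]big_geq ?mulr1 //; lia.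
by apply: eq_big_nat => bb /andP[_ bb_lt]; rewrite centered_arc_weight //; lia.
Qed.
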